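(* Let $n\in\mathbb{N}$ and let $k=k(n)$ be a positive integer with $k(n)\to\infty$ as $n\to\infty$. Generate $n$ binary strings $\mathbf{s}_1,\dots,\mathbf{s}_n$, each of length $k$, independently and uniformly at random. For a fixed $i$ and each $j\neq i$, let $X_{ij}$ be the number of bits of $\mathbf{s}_j$ read when $\mathbf{s}_j$ is compared with $\mathbf{s}_i$ by reading bit-by-bit from left to right until the first position where $\mathbf{s}_j$ differs from $\mathbf{s}_i$ (inclusive of that position); if $\mathbf{s}_j=\mathbf{s}_i$ then all $k$ bits are read. Let $X_i=\sum_{j\neq i}X_{ij}$ and $X=\max_i X_i$. Then $X\lesssim 2n$, i.e. for all $\varepsilon_1,\varepsilon_2>0$ and all sufficiently large $n$, $\mathbb{P}\left(\frac{X}{2n}<1+\varepsilon_1\right)>1-\varepsilon_2$. *)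

From HB Require Import structures.
From mathcomp Require Import all_boot all_order all_algebra.
From mathcomp Require Import reals.
Set Implicit Arguments. Unset Strict Implicit. Unset Printing Implicit Defensive.
Import Order.TTheory GRing.Theory Num.Theory.

Definition bstring (k : nat) := {ffun 'I_k -> bool}.

Definition cmp_cost (k : nat) (a b : bstring k) : nat :=
  if a == b then k else (find (fun p : 'I_k => a p != b p) (enum 'I_k)).+1.

Definition Xi (n k : nat) (s : {ffun 'I_n -> bstring k}) (i : 'I_n) : nat :=
  \sum_(j < n | j != i) cmp_cost (s i) (s j).

Definition Xmax (n k : nat) (s : {ffun 'I_n -> bstring k}) : nat :=
  \max_(i < n) Xi s i.

Definition unif_prob (R : realType) (n k : nat)
    (E : {ffun 'I_n -> bstring k} -> bool) : R :=
  (#|[set s | E s]|%:R / #|{: {ffun 'I_n -> bstring k}}|%:R)%R.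

(* For a fixed string a, X_ab > t forces b to agree with a on its first t bits,
   an event of probability 2^-t; hence E[d^X_ab] <= d/(2-d) for 1 <= d < 2.
   Given s_i the costs X_ij are independent, so with d = c^q Markov's inequality
   gives P(q X_i >= (2q+1) n) <= (d/(2-d))^(n-1) / c^((2q+1) n). For c > 1 close
   enough to 1 that c^(q+1) (2 - c^q) > 1 this decays geometrically in n, so a
   union bound over i shows X < (2 + 1/q) n with probability tending to 1; it
   remains to take q with 1/q <= 2 eps1. *)

From HB Require Import structures.
From mathcomp Require Import all_boot all_order all_algebra.
From mathcomp Require Import reals.
From mathcomp Require Import ring lra.
Import Order.TTheory GRing.Theory Num.Theory.
Set Implicit Arguments. Unset Strict Implicit.

Section Strings.
Variable k : nat.
Implicit Types (a b : bstring k) (t : nat).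

Lemma card_bstring : #|bstring k| = (2 ^ k)%N.
Proof. by rewrite card_ffun card_bool card_ord. Qed.

Definition prefix_eq t a b := [forall p : 'I_k, (p < t)%N ==> (a p == b p)].

Lemma cmp_cost_le a b : (cmp_cost a b <= k)%N.
Proof.
rewrite /cmp_cost; case: eqP => // /eqP neq_ab.
have [p] : exists p, a p != b p.
  by apply/existsP; rewrite -negb_forall; apply: contra neq_ab => /forallP eq_ab;
     apply/eqP/ffunP => p; apply/eqP.
move=> ab_p; have := has_find (fun p => a p != b p) (enum 'I_k).
by rewrite size_enum_ord => <-; apply/hasP; exists p; rewrite ?mem_enum.
Qed.

Lemma prefix_eq_cmp_cost a b t : (t < cmp_cost a b)%N -> prefix_eq t a b.
Proof.
rewrite /cmp_cost /prefix_eq; case: eqP => [-> _|_ t_lt].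
  by apply/forallP => p; apply/implyP.
apply/forallP => p; apply/implyP => p_lt_t.
have := @before_find _ p (fun p => a p != b p) (enum 'I_k) p (leq_trans p_lt_t t_lt).
by rewrite nth_ord_enum => /negbFE.
Qed.

Lemma card_prefix_eq a t : (t <= k)%N ->
  #|[pred b | prefix_eq t a b]| = (2 ^ (k - t))%N.
Proof.
move=> t_le_k.
pose F (p : 'I_k) : pred bool := if (p < t)%N then pred1 (a p) else predT.
have -> : #|[pred b | prefix_eq t a b]| = #|family F|.
  apply: eq_card => b; rewrite !inE; apply/forallP/familyP => eq_ab p;
    by have := eq_ab p; rewrite /F; case: ifP; rewrite //= eq_sym.
rewrite card_family foldrE big_image /=.
have cardF p : #|F p| = if (p < t)%N then 1%N else 2%N.
  by rewrite /F; case: ifP; rewrite ?card1 ?card_bool.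
under eq_bigr do rewrite cardF.
rewrite -(big_mkord xpredT (fun p => if (p < t)%N then 1%N else 2%N)).
rewrite (big_cat_nat (leq0n t) t_le_k) /= big_nat_cond big1 ?mul1n; last first.
  by move=> p /andP[/andP[_ ->]].
rewrite big_nat_cond (eq_bigr (fun _ => 2%N)); last first.
  by move=> p /andP[/andP[t_le_p _] _]; rewrite ltnNge t_le_p.
by rewrite -big_nat_cond prod_nat_const_nat.
Qed.

End Strings.

Local Open Scope ring_scope.

Lemma geometric_sum_le (R : realFieldType) (x : R) n :
  0 <= x < 1 -> \sum_(i < n) x ^+ i <= (1 - x)^-1.
Proof.
move=> /andP[x_ge0 x_lt1]; have x1_gt0 : 0 < 1 - x by rewrite subr_gt0.
rewrite -(ler_pM2l x1_gt0) mulfV ?gt_eqF // -opprB mulNr -subrX1 opprB.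
by rewrite lerBlDr lerDl exprn_ge0.
Qed.

Lemma bernoulli_ineq (R : realDomainType) (x : R) m :
  -1 <= x -> 1 + m%:R * x <= (1 + x) ^+ m.
Proof.
move=> x_ge; elim: m => [|m IH]; first by rewrite mul0r addr0.
have x1_ge0 : 0 <= 1 + x by rewrite -lerBlDl sub0r.
have x2_ge0 : 0 <= m%:R * x ^+ 2 by rewrite mulr_ge0 ?sqr_ge0.
rewrite exprS -natr1; apply: le_trans (ler_wpM2l x1_ge0 IH); nra.
Qed.

Lemma binomial2_le_expr (R : realDomainType) (a : R) m : 0 <= a ->
  'C(m, 2)%:R * a ^+ 2 <= (1 + a) ^+ m.
Proof.
move=> a_ge0; rewrite addrC exprD1n mulr_natl.
have terms_ge0 (i : 'I_m.+1) : 0 <= a ^+ i *+ 'C(m, i) by rewrite mulrn_wge0 // exprn_ge0.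
case: (ltnP m 2) => [m_lt2|m_ge2]; first by rewrite bin_small // mulr0n sumr_ge0.
by rewrite (bigD1 (Ordinal (m_ge2 : (2 < m.+1)%N))) //= lerDl sumr_ge0.
Qed.

Lemma exists_nat_lt_expr (R : archiFieldType) (A e : R) : 1 < A -> 0 < e ->
  exists N, forall n, (N <= n)%N -> n%:R < e * A ^+ n.
Proof.
move=> A_gt1 e_gt0; set a := A - 1.
have a_gt0 : 0 < a by rewrite subr_gt0.
have ea_gt0 : 0 < e * a ^+ 2 by rewrite mulr_gt0 // exprn_gt0.
have B_ge0 : 0 <= 2 / (e * a ^+ 2) by rewrite divr_ge0 // ltW.
exists (Num.Def.archi_bound (2 / (e * a ^+ 2))).+1 => n N_le_n.
have n_gt0 : (0 < n)%N by apply: leq_trans N_le_n.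
have n1_large : 2 < e * a ^+ 2 * n.-1%:R.
  rewrite -ltr_pdivrMl // mulrC; apply: lt_le_trans (archi_boundP B_ge0) _.
  by rewrite ler_nat -ltnS prednK.
have binom : (n%:R * n.-1%:R / 2) * a ^+ 2 <= A ^+ n.
  have -> : n%:R * n.-1%:R / 2 = 'C(n, 2)%:R :> R.
    have bin2_twice : (2 * 'C(n, 2) = n * n.-1)%N by rewrite mul_bin_left bin1 subn1 mulnC.
    by rewrite -natrM -bin2_twice natrM; field.
  by rewrite -[A](subrK 1) addrC binomial2_le_expr // ltW.
have n_pos : 0 < n%:R :> R by rewrite ltr0n.
apply: lt_le_trans (ler_wpM2l (ltW e_gt0) binom); nra.
Qed.

(* Inserting the indicator of [s i = a] at coordinate i splits the product over
   the coordinates of s. *)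
Lemma sum_ffun_prod_neq (R : comPzSemiRingType) (T : finType) n (i : 'I_n) (F : T -> T -> R) :
  \sum_(s : {ffun 'I_n -> T}) \prod_(j | j != i) F (s i) (s j)
    = \sum_(a : T) (\sum_(b : T) F a b) ^+ n.-1.
Proof.
pose G a j b := if j == i then (b == a)%:R else F a b.
have fix_i (s : {ffun 'I_n -> T}) : \prod_(j | j != i) F (s i) (s j) = \sum_a \prod_j G a j (s j).
  symmetry; rewrite (bigD1 (s i)) //= [X in _ + X]big1 => [|a a_neq]; last first.
    by rewrite (bigD1 i) //= /G eqxx eq_sym (negbTE a_neq) mul0r.
  rewrite addr0 (bigD1 i) //= /G !eqxx mul1r.
  by apply: eq_bigr => j /negbTE ->.
rewrite (eq_bigr _ (fun s _ => fix_i s)) exchange_big /=; apply: eq_bigr => a _.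
rewrite -bigA_distr_bigA /= (bigD1 i) //= /G eqxx (bigD1 a) //= eqxx big1 => [|b /negbTE -> //].
rewrite addr0 mul1r -[in n.-1](card_ord n) -(cardC1 i) -prodr_const.
by apply: eq_bigr => j /negbTE ->.
Qed.

(* d^X = 1 + (d - 1) \sum_(t < X) d^t, and t < X forces a common prefix of length t. *)
Lemma pow_cmp_cost_le (R : realFieldType) k (a b : bstring k) (d : R) : 1 <= d ->
  d ^+ cmp_cost a b <= 1 + (d - 1) * \sum_(t < k) (if prefix_eq t a b then d ^+ t else 0).
Proof.
move=> d_ge1; rewrite -lerBlDl subrX1 ler_wpM2l ?subr_ge0 //.
rewrite (big_ord_widen _ (fun t => d ^+ t) (cmp_cost_le a b)) big_mkcond.
apply: ler_sum => t _; case: ifP => [t_lt|_]; first by rewrite prefix_eq_cmp_cost.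
by case: ifP => // _; rewrite exprn_ge0 // (le_trans ler01).
Qed.

Lemma sum_pow_cmp_cost_le (R : realFieldType) k (a : bstring k) (d : R) : 1 <= d < 2 ->
  \sum_(b : bstring k) d ^+ cmp_cost a b <= (2 ^ k)%:R * (d / (2 - d)).
Proof.
move=> /andP[d_ge1 d_lt2].
apply: le_trans (ler_sum _ (fun b _ => pow_cmp_cost_le a b d_ge1)) _.
rewrite big_split sumr_const card_bstring -mulr_sumr exchange_big /=.
have sum_prefix (t : 'I_k) :
    \sum_(b : bstring k) (if prefix_eq t a b then d ^+ t else 0) = (2 ^ k)%:R * (d / 2) ^+ t.
  rewrite -big_mkcond sumr_const (card_prefix_eq a (ltnW (ltn_ord t))).
  have -> : (2 ^ k)%:R = (2 ^ (k - t))%:R * 2 ^+ t :> R.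
    by rewrite -natrX -natrM -expnD subnK // ltnW.
  by rewrite -mulr_natl expr_div_n; field; rewrite expf_neq0 // pnatr_eq0.
under eq_bigr do rewrite sum_prefix; rewrite -mulr_sumr.
have geom : \sum_(t < k) (d / 2) ^+ t <= 2 / (2 - d).
  have -> : 2 / (2 - d) = (1 - d / 2)^-1 by field; lra.
  by apply: geometric_sum_le; apply/andP; split; lra.
have -> : d / (2 - d) = 1 + (d - 1) * (2 / (2 - d)) by field; lra.
rewrite mulrDr mulr1 lerD2l mulrCA ler_wpM2l ?ler0n //.
by rewrite ler_wpM2l // subr_ge0.
Qed.

Section RandomStrings.
Variables (R : realType) (n k : nat).
Local Notation config := {ffun 'I_n -> bstring k}.

Lemma card_config : #|{: config}| = (2 ^ (k * n))%N.
Proof. by rewrite card_ffun card_bstring card_ord expnM. Qed.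

Lemma card_set_sum (P : pred config) : #|[set s | P s]| = (\sum_(s : config) P s)%N.
Proof.
by rewrite -sum1_card big_mkcond; apply: eq_bigr => s _; rewrite inE; case: (P s).
Qed.

Lemma unif_prob_union (I : finType) (E : pred config) (B : I -> pred config) :
  (forall s, ~~ E s -> exists i, B i s) ->
  1 - \sum_i unif_prob R (B i) <= unif_prob R E.
Proof.
move=> cover.
have card_le : (#|{: config}| <= #|[set s | E s]| + \sum_i #|[set s | B i s]|)%N.
  rewrite card_set_sum (eq_bigr _ (fun i _ => card_set_sum (B i))) -sum1_card.
  rewrite exchange_big -big_split /=; apply: leq_sum => s _.
  case: (boolP (E s)) => // /cover[i Bi_s].
  by rewrite (bigD1 i) //= Bi_s.
have T_gt0 : 0 < #|{: config}|%:R :> R by rewrite card_config ltr0n expn_gt0.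
rewrite /unif_prob -mulr_suml lerBlDr -mulrDl ler_pdivlMr // mul1r.
by rewrite -natr_sum -natrD ler_nat.
Qed.

Lemma unif_prob_Xi_ge (i : 'I_n) (c : R) (q t : nat) : 1 <= c -> c ^+ q < 2 ->
  unif_prob R (fun s : config => (t <= q * Xi s i)%N) * c ^+ t
    <= (c ^+ q / (2 - c ^+ q)) ^+ n.-1.
Proof.
move=> c_ge1 d_lt2; set d := c ^+ q in d_lt2 *; set g := d / (2 - d).
have d_ge1 : 1 <= d by rewrite exprn_ege1.
have markov : #|[set s : config | (t <= q * Xi s i)%N]|%:R * c ^+ t
    <= \sum_(s : config) \prod_(j | j != i) d ^+ cmp_cost (s i) (s j).
  rewrite mulr_natl -sumr_const big_mkcond /=; apply: ler_sum => s _.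
  rewrite inE prodrXr -exprM; case: ifP => [tail|_].
    exact: ler_weXn2l.
  by rewrite exprn_ge0 // (le_trans ler01).
rewrite (sum_ffun_prod_neq i (fun a b => d ^+ cmp_cost a b)) in markov.
have pair_bound (a : bstring k) :
    (\sum_b d ^+ cmp_cost a b) ^+ n.-1 <= ((2 ^ k)%:R * g) ^+ n.-1.
  have cost_ge0 b : 0 <= d ^+ cmp_cost a b by rewrite exprn_ge0 // (le_trans ler01).
  have bound_ge0 : 0 <= (2 ^ k)%:R * g by rewrite mulr_ge0 // divr_ge0 //; lra.
  by rewrite lerXn2r ?nnegrE ?sumr_ge0 // sum_pow_cmp_cost_le // d_ge1.
have n_gt0 : (0 < n)%N by apply: leq_ltn_trans (ltn_ord i).
have T_gt0 : 0 < #|{: config}|%:R :> R by rewrite card_config ltr0n expn_gt0.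
have sum_bound : \sum_(a : bstring k) ((2 ^ k)%:R * g) ^+ n.-1 = #|{: config}|%:R * g ^+ n.-1.
  rewrite card_config; have -> : ((2 ^ (k * n))%:R : R) = (2 ^ k)%:R * (2 ^ k)%:R ^+ n.-1.
    by rewrite -natrX -natrM -expnS prednK // expnM.
  by rewrite sumr_const card_bstring exprMn -mulrA mulr_natl.
rewrite /unif_prob mulrAC ler_pdivrMr // [leRHS]mulrC -sum_bound.
by apply: le_trans markov _; apply: ler_sum => a _; apply: pair_bound.
Qed.

Lemma Xmax_ratio_lt (s : config) (q : nat) (eps : R) : (0 < n)%N ->
  1 <= 2 * eps * q%:R -> (forall i, q * Xi s i < (2 * q + 1) * n)%N ->
  (Xmax s)%:R / (2 * n)%:R < 1 + eps.
Proof.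
move=> n_gt0 q_large Xi_lt.
rewrite /Xmax; have [i ->] := @bigop.eq_bigmax _ (Xi s) (ltac:(by rewrite card_ord)).
have := Xi_lt i; rewrite -(ltr_nat R) !natrM natrD natrM.
have n_pos : 0 < n%:R :> R by rewrite ltr0n.
rewrite ltr_pdivrMr ?natrM ?mulr_gt0 //.
move: (Xi s i)%:R => X XL.
have q_pos : 0 < q%:R :> R by rewrite ltr0n lt0n; apply: contraTneq q_large => ->; rewrite mulr0 ler10.
rewrite -(ltr_pM2l q_pos); apply: lt_le_trans XL _; nra.
Qed.

End RandomStrings.

(* c = 1 + h with q (q + 1) h = 1/4: Bernoulli's inequality bounds c^q (1 - q h)
   above by 1 and c^(q+1) below by 1 + (q + 1) h, which is all that is needed. *)
Lemma exists_chernoff_base (R : realFieldType) q : (0 < q)%N ->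
  exists c : R, [/\ 1 <= c, c ^+ q < 2 & 1 < c ^+ q.+1 * (2 - c ^+ q)].
Proof.
move=> q_gt0; set Q : R := q%:R; have Q_ge1 : 1 <= Q by rewrite ler1n.
set h := (4 * Q * (Q + 1))^-1; set u := Q * h.
have h_gt0 : 0 < h by rewrite invr_gt0 !mulr_gt0 //; lra.
have uQ : u * (Q + 1) = 4^-1.
  by rewrite /u /h; field; apply/andP; split; rewrite gt_eqF //; lra.
have u_le : u <= 8^-1 by nra.
have h_le_u : h <= u by rewrite /u; nra.
exists (1 + h); set d := (1 + h) ^+ q; set e := (1 + h) ^+ q.+1.
have d_ge0 : 0 <= d by rewrite exprn_ge0 //; lra.
have d_le : d * (1 - u) <= 1.
  have : 1 - u <= (1 - h) ^+ q by rewrite -mulrN; apply: bernoulli_ineq; lra.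
  have : (1 - h ^+ 2) ^+ q <= 1 by rewrite exprn_ile1 //; nra.
  have -> : 1 - h ^+ 2 = (1 + h) * (1 - h) by ring.
  rewrite exprMn -/d => dh_le bern; apply: le_trans dh_le.
  by rewrite ler_wpM2l.
have e_ge : 1 + (Q + 1) * h <= e by rewrite /Q natr1 /e bernoulli_ineq //; lra.
have Qh_ge0 : 0 <= (Q + 1) * h by rewrite mulr_ge0 //; lra.
have two_d : 1 - 2 * u <= (2 - d) * (1 - u) by nra.
split; [lra | nra |].
have lower : (1 + (Q + 1) * h) * (1 - 2 * u) <= e * ((2 - d) * (1 - u)).
  by apply: ler_pM => //; lra.
have expand : (1 + (Q + 1) * h) * (1 - 2 * u) = 1 - u + h / 2.
  transitivity (1 - 2 * u + (Q + 1) * h - 2 * h * (u * (Q + 1))); first ring.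
  by rewrite uQ /u; field.
rewrite -(ltr_pM2r (_ : 0 < 1 - u)); last lra.
by rewrite mul1r -mulrA; apply: lt_le_trans lower; rewrite expand; lra.
Qed.

Lemma union_tail_vanishes (R : archiFieldType) (c eps : R) q :
  1 <= c -> c ^+ q < 2 -> 1 < c ^+ q.+1 * (2 - c ^+ q) -> 0 < eps ->
  exists N, forall n, (N <= n)%N ->
    n%:R * (c ^+ q / (2 - c ^+ q)) ^+ n.-1 / c ^+ ((2 * q + 1) * n) < eps.
Proof.
move=> c_ge1 d_lt2 A_gt1 eps_gt0.
set d := c ^+ q in d_lt2 A_gt1 *; set A := c ^+ q.+1 * (2 - d) in A_gt1.
set g := d / (2 - d).
have d_ge1 : 1 <= d by rewrite exprn_ege1.
have g_ge1 : 1 <= g by rewrite ler_pdivlMr ?mul1r; lra.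
have gA : g * A = c ^+ (2 * q + 1).
  rewrite /g /A exprD mulnC exprM expr2 exprSr -/d; field; lra.
have [N grow] := exists_nat_lt_expr A_gt1 eps_gt0.
exists N => n /grow n_lt; case: n n_lt => [|m] n_lt /=; first by rewrite mul0r mul0r.
have g_gt0 : 0 < g by lra.
have gA_gt0 : 0 < g * A by rewrite mulr_gt0 //; lra.
rewrite exprM -gA ltr_pdivrMr ?exprn_gt0 //.
have -> : eps * (g * A) ^+ m.+1 = g ^+ m * (g * (eps * A ^+ m.+1)).
  by rewrite exprMn exprS; ring.
rewrite mulrC ltr_pM2l ?exprn_gt0 //; apply: lt_le_trans n_lt _.
by rewrite ler_peMl // mulr_ge0 ?exprn_ge0 //; lra.
Qed.

Theorem lemma2p2 (R : realType) (k : nat -> nat)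
    (kpos : forall n, (0 < k n)%N)
    (kinf : forall M : nat, exists N : nat, forall n : nat, (N <= n)%N -> (M <= k n)%N)
    (eps1 eps2 : R) (he1 : 0 < eps1) (he2 : 0 < eps2) :
  exists N : nat, forall n : nat, (N <= n)%N ->
    1 - eps2 < unif_prob R
      (fun s : {ffun 'I_n -> bstring (k n)} =>
         (Xmax s)%:R / (2 * n)%:R < 1 + eps1).
Proof.
have eps_ge0 : 0 <= (2 * eps1)^-1 by rewrite invr_ge0 mulr_ge0 // ltW.
set q := (Num.Def.archi_bound (2 * eps1)^-1).+1.
have q_large : 1 <= 2 * eps1 * q%:R.
  rewrite -ler_pdivrMl ?mulr_gt0 // mulr1; apply: ltW; apply: lt_le_trans (archi_boundP eps_ge0) _.
  by rewrite ler_nat.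
have [c [c_ge1 d_lt2 A_gt1]] := @exists_chernoff_base R q erefl.
have [N tail] := union_tail_vanishes c_ge1 d_lt2 A_gt1 he2.
exists N.+1 => n N_lt_n; have n_gt0 : (0 < n)%N by apply: leq_ltn_trans N_lt_n.
pose large i (s : {ffun 'I_n -> bstring (k n)}) := ((2 * q + 1) * n <= q * Xi s i)%N.
pose small (s : {ffun 'I_n -> bstring (k n)}) := (Xmax s)%:R / (2 * n)%:R < 1 + eps1.
have cover s : ~~ small s -> exists i, large i s.
  move=> /negP not_small; case: (boolP [exists i, large i s]) => [/existsP //|/existsPn no_large].
  case: not_small; apply: Xmax_ratio_lt n_gt0 q_large _ => i.
  by rewrite ltnNge no_large.
apply: lt_le_trans (unif_prob_union R (E := small) cover); rewrite ltrD2l ltrN2.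
apply: le_lt_trans (tail n (ltnW N_lt_n)).
have -> : (n%:R : R) = #|'I_n|%:R by rewrite card_ord.
rewrite -mulrA mulr_natl -sumr_const; apply: ler_sum => i _.
by rewrite ler_pdivlMr ?exprn_gt0 ?(lt_le_trans ltr01) // unif_prob_Xi_ge.
Qed.
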